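(* Let $G$ be a finite simple undirected graph without isolated vertices, and let $H$ be a subgraph of $G$ with $V(H)=V(G)$, also without isolated vertices. If $\gamma_t(H)=\gamma_t(G)$, then $\tau(H)\le \tau(G)$.
   Context: A set $D \subseteq V(G)$ is a total dominating set (TDS) of $G$ if every vertex of $G$ has a neighbor in $D$. $\gamma_t(G)$ is the minimum cardinality of a TDS of $G$; a TDS of that cardinality is a $\gamma_t(G)$-set, and $\tau(G)$ is the number of $\gamma_t(G)$-sets. *)

From mathcomp Require Import all_boot.
Set Implicit Arguments. Unset Strict Implicit. Unset Printing Implicit Defensive.

Definition simple_graph (V : finType) (e : rel V) : Prop :=
  symmetric e /\ irreflexive e.

Definition no_isolated (V : finType) (e : rel V) : Prop :=
  forall v : V, exists u : V, e v u.

Definition spanning_subgraph (V : finType) (eH eG : rel V) : Prop :=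
  forall u v : V, eH u v -> eG u v.

Definition is_tds (V : finType) (e : rel V) (D : {set V}) : bool :=
  [forall v : V, exists u : V, (u \in D) && e v u].

(* Total domination number: minimum cardinality of a TDS
   (the default #|V| is only used if no TDS exists, which cannot happen
   for graphs without isolated vertices). *)
Definition gamma_t (V : finType) (e : rel V) : nat :=
  \big[minn/#|V|]_(D : {set V} | is_tds e D) #|D|.

Definition tau (V : finType) (e : rel V) : nat :=
  #|[set D : {set V} | is_tds e D & #|D| == gamma_t e]|.

From mathcomp Require Import all_boot.

(* Adding edges preserves total domination, so every minimum TDS of H is a TDS
   of G of size gamma_t H = gamma_t G, i.e. a minimum TDS of G. *)

Lemma is_tds_subgraph (V : finType) (eH eG : rel V) (D : {set V}) :
  spanning_subgraph eH eG -> is_tds eH D -> is_tds eG D.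
Proof.
move=> sub /forallP domH; apply/forallP => v.
have /existsP[u /andP[uD vu]] := domH v.
by apply/existsP; exists u; rewrite uD (sub _ _ vu).
Qed.

Theorem proposition2p7 (V : finType) (eG eH : rel V) :
  simple_graph eG -> no_isolated eG ->
  simple_graph eH -> no_isolated eH ->
  spanning_subgraph eH eG ->
  gamma_t eH = gamma_t eG ->
  tau eH <= tau eG.
Proof.
move=> _ _ _ _ sub gammaE; apply: subset_leq_card; apply/subsetP => D.
rewrite !inE gammaE => /andP[tdsH ->]; rewrite andbT.
exact: is_tds_subgraph tdsH.
Qed.
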